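(* Let $P,Q,\widetilde P,\widetilde Q\in\mathbb{R}^{3\times3}$ be symmetric matrices with entries $p_{ij},q_{ij},\widetilde p_{ij},\widetilde q_{ij}$. Let $\Omega=\{(x_i,y_i)\}_{i=1}^N\subset\mathbb{R}^2$ with $\operatorname{rank}V_\Omega=15$, write $\bar x=(x,y,1)^T$, and suppose that $$\frac{\bar x^TP\bar x}{\bar x^TQ\bar x}=\frac{\bar x^T\widetilde P\bar x}{\bar x^T\widetilde Q\bar x}\quad\text{for all }(x,y)\in\Omega$$ (with the denominators nonzero). Suppose moreover that one of the following holds. Case 1: $q_{11}\ne0$, $q_{22}\ne0$, $q_{33}\ne0$, and $4(p_{11}q_{12}-p_{12}q_{11})(p_{22}q_{12}-p_{12}q_{22})+(p_{11}q_{22}-p_{22}q_{11})^2\ne0$, $4(p_{11}q_{13}-p_{13}q_{11})(p_{33}q_{13}-p_{13}q_{33})+(p_{11}q_{33}-p_{33}q_{11})^2\ne0$, $4(p_{22}q_{23}-p_{23}q_{22})(p_{33}q_{23}-p_{23}q_{33})+(p_{22}q_{33}-p_{33}q_{22})^2\ne0$. Case 2: $p_{j2}=p_{2j}=q_{j2}=q_{2j}=\widetilde p_{j2}=\widetilde p_{2j}=\widetilde q_{j2}=\widetilde q_{2j}=0$ for all $j\in\{1,2,3\}$, $q_{11}\ne0$, $q_{33}\ne0$, and $4(p_{11}q_{13}-p_{13}q_{11})(p_{33}q_{13}-p_{13}q_{33})+(p_{11}q_{33}-p_{33}q_{11})^2\ne0$. Then there is a constant scalar $t\ne0$ with $P=t\widetilde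 P$ and $Q=t\widetilde Q$.
   Context: For a finite set of locations $\Omega=\{(x_i,y_i)\}_{i=1}^N$, $V_\Omega\in\mathbb{R}^{N\times15}$ denotes the matrix whose $i$-th row consists of all 15 monomials $x_i^py_i^q$ with $p,q\ge0$, $p+q\le4$. *)

From HB Require Import structures.
From mathcomp Require Import all_boot all_order all_algebra.
From mathcomp Require Import reals.
Set Implicit Arguments. Unset Strict Implicit. Unset Printing Implicit Defensive.
Import Order.TTheory GRing.Theory Num.Theory.
Local Open Scope ring_scope.

(* Exponent pairs (p,q), p+q <= 4, in graded order: 15 monomials x^p y^q. *)
Definition mon_exps : seq (nat * nat) :=
  flatten [seq [seq (p, (k - p)%N) | p <- iota 0 k.+1] | k <- iota 0 5].

(* V_Omega : N x 15 matrix, row i = all monomials x_i^p y_i^q, p+q <= 4. *)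
Definition Vmat (R : ringType) (N : nat) (xs ys : 'I_N -> R) : 'M[R]_(N, 15) :=
  \matrix_(i < N, j < 15)
    (xs i ^+ (nth (0, 0)%N mon_exps j).1 * ys i ^+ (nth (0, 0)%N mon_exps j).2).

Definition xbar (R : ringType) (x y : R) : 'rV[R]_3 :=
  \row_(j < 3) [:: x; y; 1]`_j.

Definition qf (R : ringType) (M : 'M[R]_3) (x y : R) : R :=
  (xbar x y *m M *m (xbar x y)^T) ord0 ord0.

(* 1-based entry access: ent M i j = m_{ij} for 1 <= i,j <= 3 *)
Definition ent (R : Type) (M : 'M[R]_3) (i j : nat) : R :=
  M (@inord 2 i.-1) (@inord 2 j.-1).

Definition disc_cond (R : ringType) (P Q : 'M[R]_3) (a b : nat) : R :=
  4 * (ent P a a * ent Q a b - ent P a b * ent Q a a)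
    * (ent P b b * ent Q a b - ent P a b * ent Q b b)
  + (ent P a a * ent Q b b - ent P b b * ent Q a a) ^+ 2.

From HB Require Import structures.
From mathcomp Require Import all_boot all_order all_algebra.
From mathcomp Require Import reals ring.
Import Order.TTheory GRing.Theory Num.Theory.
Set Implicit Arguments. Unset Strict Implicit.
Local Open Scope ring_scope.

(* Clearing denominators, P Qt - Pt Q is a quartic polynomial in (x, y)
   vanishing on Omega; its 15 coefficients form a vector annihilated by
   V_Omega, which has full column rank, so the quartic vanishes identically.
   Reading off its coefficients along the three coordinate pairs gives
   identities A Dt = At D between binary quadratic forms, A and D being the
   restrictions of P and Q.  If A and D have nonzero resultant and D has a
   nonzero X^2 coefficient, then At and Dt are the same multiple s of A and D.
   Overlapping pairs share the entry that fixes s, hence Pt = s P, Qt = s Q. *)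

Section BinaryQuadraticForms.
Variable R : comNzRingType.

(* The coefficients of (a X^2 + 2 b XY + c Y^2) (d X^2 + 2 e XY + f Y^2),
   from X^4 down to Y^4. *)
Definition binary_mul (a b c d e f : R) : seq R :=
  [:: a * d; 2 * (a * e + b * d); a * f + 4 * (b * e) + c * d;
      2 * (b * f + c * e); c * f].

Definition binary_resultant (a b c d e f : R) : R :=
  4 * (a * e - b * d) * (c * e - b * f) + (a * f - c * d) ^+ 2.

End BinaryQuadraticForms.

Section CoprimeBinaryForms.
Variable R : fieldType.
Hypothesis two_neq0 : (2 : R) != 0.

Lemma binary_mul_kernel (a b c d e f B C E F : R) :
  binary_resultant a b c d e f != 0 ->
  binary_mul a b c 0 E F = binary_mul 0 B C d e f ->
  [/\ B = 0, C = 0, E = 0 & F = 0].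
Proof.
move=> res0 [_ E3 E2 E1 E0].
have four_neq0 : (4 : R) != 0 by rewrite -[4]/(2 * 2)%:R natrM mulf_neq0.
(* Cramer's rule for the 4x4 system: each unknown times [4 * resultant] is
   an explicit combination of the equations. *)
have key X k3 k2 k1 k0 :
  4 * binary_resultant a b c d e f * X =
    k3 * (2 * (a * E + b * 0) - 2 * (0 * e + B * d))
  + k2 * (a * F + 4 * (b * E) + c * 0 - (0 * f + 4 * (B * e) + C * d))
  + k1 * (2 * (b * F + c * E) - 2 * (B * f + C * e))
  + k0 * (c * F - C * f) -> X = 0.
  rewrite E3 E2 E1 E0 !subrr !mulr0 !addr0 => /eqP.
  by rewrite !mulf_eq0 (negbTE four_neq0) (negbTE res0) => /eqP.
split.
- apply: (key B (-(2) * c*c*d + 8 * b*c*e - 8 * b*b*f + 2 * a*c*f)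
    (-(4) * a*c*e + 4 * a*b*f) (2 * a*c*d - 2 * a*a*f) (-(4) * a*b*d + 4 * a*a*e)).
  rewrite /binary_resultant; ring.
- apply: (key C (8 * c*c*e - 8 * b*c*f) (-(4) * c*c*d + 4 * a*c*f)
    (8 * b*c*d - 8 * a*c*e) (-(16) * b*b*d + 4 * a*c*d + 16 * a*b*e - 4 * a*a*f)).
  rewrite /binary_resultant; ring.
- apply: (key E (8 * c*e*e - 2 * c*d*f - 8 * b*e*f + 2 * a*f*f)
    (-(4) * c*d*e + 4 * b*d*f) (2 * c*d*d - 2 * a*d*f) (-(4) * b*d*d + 4 * a*d*e)).
  rewrite /binary_resultant; ring.
- apply: (key F (8 * c*e*f - 8 * b*f*f) (-(4) * c*d*f + 4 * a*f*f)
    (8 * b*d*f - 8 * a*e*f) (4 * c*d*d - 16 * b*d*e + 16 * a*e*e - 4 * a*d*f)).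
  rewrite /binary_resultant; ring.
Qed.

Lemma binary_mul_proportional (a b c d e f a' b' c' d' e' f' : R) :
  d != 0 -> binary_resultant a b c d e f != 0 ->
  binary_mul a b c d' e' f' = binary_mul a' b' c' d e f ->
  [/\ a' = d' / d * a, b' = d' / d * b, c' = d' / d * c,
      e' = d' / d * e & f' = d' / d * f].
Proof.
move=> d0 res0; have [s ->] : exists s, d' = s * d by exists (d' / d); rewrite divfK.
rewrite mulfK // => -[E4 E3 E2 E1 E0].
have ha : a' = s * a by apply: (mulIf d0); rewrite -E4; ring.
subst a'.
have shift (x y x' y' : R) : x' = y' -> x - y = x' - y' -> x = y.
  by move=> -> /eqP; rewrite subrr subr_eq0 => /eqP.
have [|/subr0_eq -> /subr0_eq -> /subr0_eq -> /subr0_eq ->] :=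
  binary_mul_kernel (B := b' - s * b) (C := c' - s * c) (E := e' - s * e)
    (F := f' - s * f) res0; last by [].
congr [:: _; _; _; _; _];
  [ring | apply: (shift _ _ _ _ E3) | apply: (shift _ _ _ _ E2)
  | apply: (shift _ _ _ _ E1) | apply: (shift _ _ _ _ E0)]; ring.
Qed.

End CoprimeBinaryForms.

Section QuadraticForms.
Variable R : comNzRingType.
Implicit Types (M N : 'M[R]_3) (u v e : nat * nat).

Definition quad_exps : seq (nat * nat) :=
  [:: (0, 0); (0, 1); (1, 0); (0, 2); (1, 1); (2, 0)]%N.

Definition qf_coef M e : R :=
  match e with
  | (2, 0)%N => ent M 1 1
  | (1, 1)%N => ent M 1 2 + ent M 2 1
  | (0, 2)%N => ent M 2 2
  | (1, 0)%N => ent M 1 3 + ent M 3 1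
  | (0, 1)%N => ent M 2 3 + ent M 3 2
  | (0, 0)%N => ent M 3 3
  | _ => 0
  end.

Definition exp_add u v : nat * nat := (u.1 + v.1, u.2 + v.2)%N.

Definition monomial (x y : R) e : R := x ^+ e.1 * y ^+ e.2.

Lemma monomialD x y u v : monomial x y (exp_add u v) = monomial x y u * monomial x y v.
Proof. by rewrite /monomial !exprD mulrACA. Qed.

Definition qf_mul_coef M N e : R :=
  \sum_(u <- quad_exps) \sum_(v <- quad_exps | exp_add u v == e)
     qf_coef M u * qf_coef N v.

Definition qf_mul_coefs M N : 'cV[R]_15 :=
  \col_(k < 15) qf_mul_coef M N (nth (0, 0)%N mon_exps k).

Lemma ent_sym M a b : M^T = M -> ent M b a = ent M a b.
Proof. by move=> sM; rewrite /ent -{1}sM mxE. Qed.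

Lemma qf_expand M x y :
  qf M x y = \sum_(u <- quad_exps) qf_coef M u * monomial x y u.
Proof.
have I0 : (inord 0 : 'I_3) = ord0 by apply: val_inj; rewrite /= inordK.
have I1 : (inord 1 : 'I_3) = lift ord0 ord0 by apply: val_inj; rewrite /= inordK.
have I2 : (inord 2 : 'I_3) = lift ord0 (lift ord0 ord0).
  by apply: val_inj; rewrite /= inordK.
rewrite !big_cons big_nil /= /qf /xbar /monomial /ent /= I0 I1 I2.
rewrite !mxE !big_ord_recl !big_ord0 /= !mxE !big_ord_recl !big_ord0 /= !mxE /=.
ring.
Qed.

Lemma qf_mul_expand M N x y :
  qf M x y * qf N x y = \sum_(e <- mon_exps) qf_mul_coef M N e * monomial x y e.
Proof.
have exp_add_mon u v : u \in quad_exps -> v \in quad_exps -> exp_add u v \in mon_exps.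
  have : all (fun u => all (fun v => exp_add u v \in mon_exps) quad_exps) quad_exps by [].
  by move=> /allP/[apply]/allP/[apply].
rewrite !qf_expand big_distrlr /=; symmetry.
under eq_bigr => e _ do rewrite /qf_mul_coef big_distrl /=.
under eq_bigr => e _ do under eq_bigr => u _ do rewrite big_distrl big_mkcond /=.
rewrite exchange_big; apply: eq_big_seq => u uq.
rewrite exchange_big; apply: eq_big_seq => v vq.
rewrite -big_mkcond (eq_bigl (pred1 (exp_add u v))) => [|e]; last by rewrite /= eq_sym.
rewrite -big_filter filter_pred1_uniq ?exp_add_mon // big_seq1 monomialD.
by rewrite mulrACA.
Qed.

Lemma Vmat_mul_qf_mul_coefs n (xs ys : 'I_n -> R) M N i :
  (Vmat xs ys *m qf_mul_coefs M N) i 0 = qf M (xs i) (ys i) * qf N (xs i) (ys i).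
Proof.
rewrite qf_mul_expand (big_nth (0, 0)%N) big_mkord mxE.
by apply: eq_bigr => k _; rewrite !mxE mulrC.
Qed.

Lemma qf_mul_coefs_eq M N M' N' :
  qf_mul_coefs M N = qf_mul_coefs M' N' ->
  {in mon_exps, qf_mul_coef M N =1 qf_mul_coef M' N'}.
Proof.
move=> h e /(nthP (0, 0)%N) [k k15 <-]; have {}k15 : (k < 15)%N := k15.
by have := congr1 (fun c : 'cV[R]_15 => c (Ordinal k15) 0) h; rewrite !mxE.
Qed.

Definition pair_form_mul M N (a b : nat) : seq R :=
  binary_mul (ent M a a) (ent M a b) (ent M b b) (ent N a a) (ent N a b) (ent N b b).

(* The pairs (1,2), (1,3), (2,3) of homogeneous coordinates see the top
   degree part, the powers of x and the powers of y of the quartic. *)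
Lemma pair_form_mul_coefs M N : M^T = M -> N^T = N ->
  [/\ pair_form_mul M N 1 2
        = map (qf_mul_coef M N) [:: (4, 0); (3, 1); (2, 2); (1, 3); (0, 4)]%N,
      pair_form_mul M N 1 3
        = map (qf_mul_coef M N) [:: (4, 0); (3, 0); (2, 0); (1, 0); (0, 0)]%N &
      pair_form_mul M N 2 3
        = map (qf_mul_coef M N) [:: (0, 4); (0, 3); (0, 2); (0, 1); (0, 0)]%N].
Proof.
move=> sM sN; rewrite /pair_form_mul /binary_mul /qf_mul_coef unlock /exp_add /addn /=.
rewrite (ent_sym 2 1 sM) (ent_sym 3 1 sM) (ent_sym 3 2 sM).
rewrite (ent_sym 2 1 sN) (ent_sym 3 1 sN) (ent_sym 3 2 sN).
by split; congr [:: _; _; _; _; _]; ring.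
Qed.

Lemma pair_form_mul_eq M N M' N' :
  M^T = M -> N^T = N -> M'^T = M' -> N'^T = N' ->
  {in mon_exps, qf_mul_coef M N =1 qf_mul_coef M' N'} ->
  [/\ pair_form_mul M N 1 2 = pair_form_mul M' N' 1 2,
      pair_form_mul M N 1 3 = pair_form_mul M' N' 1 3 &
      pair_form_mul M N 2 3 = pair_form_mul M' N' 2 3].
Proof.
move=> sM sN sM' sN' hcoef.
have [-> -> ->] := pair_form_mul_coefs sM sN.
have [-> -> ->] := pair_form_mul_coefs sM' sN'.
by split; apply/eq_in_map; apply: sub_in1 hcoef; apply/allP.
Qed.

Lemma qfZ (s : R) M x y : qf (s *: M) x y = s * qf M x y.
Proof. by rewrite /qf -scalemxAr -scalemxAl mxE. Qed.

End QuadraticForms.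

Lemma sym_mx3_scale (R : nzRingType) (M M' : 'M[R]_3) (s : R) :
  M^T = M -> M'^T = M' ->
  (forall a b, (1 <= a <= b)%N -> (b <= 3)%N -> ent M' a b = s * ent M a b) ->
  M' = s *: M.
Proof.
move=> sM sM' h; have entE (N : 'M[R]_3) (i j : 'I_3) : N i j = ent N i.+1 j.+1.
  by rewrite /ent /= !inord_val.
apply/matrixP => i j; rewrite mxE.
wlog ij : i j / (i <= j)%N => [hw|].
  have [|/ltnW ji] := leqP i j; first exact: hw.
  have tr (N : 'M[R]_3) : N^T = N -> N i j = N j i by move=> sN; rewrite -{1}sN mxE.
  by rewrite (tr _ sM') (tr _ sM) hw.
by rewrite !entE h ?ij ?ltn_ord.
Qed.

Theorem lemma2 (R : realType) (P Q Pt Qt : 'M[R]_3) (N : nat)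
    (xs ys : 'I_N -> R) :
  P^T = P -> Q^T = Q -> Pt^T = Pt -> Qt^T = Qt ->
  \rank (Vmat xs ys) = 15%N ->
  (forall i : 'I_N,
     qf Q (xs i) (ys i) != 0 /\ qf Qt (xs i) (ys i) != 0 /\
     qf P (xs i) (ys i) / qf Q (xs i) (ys i)
       = qf Pt (xs i) (ys i) / qf Qt (xs i) (ys i)) ->
  ((* Case 1 *)
   (ent Q 1 1 != 0 /\ ent Q 2 2 != 0 /\ ent Q 3 3 != 0 /\
    disc_cond P Q 1 2 != 0 /\ disc_cond P Q 1 3 != 0 /\
    disc_cond P Q 2 3 != 0)
   \/
   (* Case 2 *)
   ((forall j : nat, (1 <= j <= 3)%N ->
       ent P j 2 = 0 /\ ent P 2 j = 0 /\ ent Q j 2 = 0 /\ ent Q 2 j = 0 /\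
       ent Pt j 2 = 0 /\ ent Pt 2 j = 0 /\ ent Qt j 2 = 0 /\ ent Qt 2 j = 0) /\
    ent Q 1 1 != 0 /\ ent Q 3 3 != 0 /\ disc_cond P Q 1 3 != 0)) ->
  exists t : R, t != 0 /\ P = t *: Pt /\ Q = t *: Qt.
Proof.
move=> sP sQ sPt sQt rankV hpts hcase.
have two_neq0 : (2 : R) != 0 by rewrite pnatr_eq0.
have hcoef : {in mon_exps, qf_mul_coef P Qt =1 qf_mul_coef Pt Q}.
  apply: qf_mul_coefs_eq; apply: (@row_full_inj _ _ _ _ (Vmat xs ys)).
    by rewrite /row_full rankV.
  apply/matrixP => i j; rewrite (ord1 j) !Vmat_mul_qf_mul_coefs.
  by have [qi0 [qti0 /eqP]] := hpts i; rewrite eqr_div // => /eqP.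
have [h12 h13 h23] := pair_form_mul_eq sP sQt sPt sQ hcoef.
pose s := ent Qt 1 1 / ent Q 1 1.
suff [-> hQt] : Pt = s *: P /\ Qt = s *: Q.
  have N_gt0 : (0 < N)%N by rewrite (leq_trans _ (rank_leq_row (Vmat xs ys))) ?rankV.
  have [_ [+ _]] := hpts (Ordinal N_gt0); rewrite hQt qfZ mulf_eq0 negb_or => /andP[s0 _].
  exists s^-1; split; first by rewrite invr_neq0.
  by rewrite !scalerA mulVf // !scale1r.
case: hcase => [[q11 [q22 [q33 [r12 [r13 r23]]]]] | [hz [q11 [q33 r13]]]].
- have [a11 a13 a33 b13 b33] := binary_mul_proportional two_neq0 q11 r13 h13.
  have [_ a12 a22 b12 b22] := binary_mul_proportional two_neq0 q11 r12 h12.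
  have [_ a23 _ b23 _] := binary_mul_proportional two_neq0 q22 r23 h23.
  rewrite b22 mulfK // -/s in a23 b23.
  have b11 : ent Qt 1 1 = s * ent Q 1 1 by rewrite divfK.
  by split; apply: sym_mx3_scale => // -[|[|[|[|a]]]] -[|[|[|[|b]]]].
- have [a11 a13 a33 b13 b33] := binary_mul_proportional two_neq0 q11 r13 h13.
  have b11 : ent Qt 1 1 = s * ent Q 1 1 by rewrite divfK.
  have [P12 [_ [Q12 [_ [Pt12 [_ [Qt12 _]]]]]]] := hz 1%N isT.
  have [P22 [_ [Q22 [_ [Pt22 [_ [Qt22 _]]]]]]] := hz 2%N isT.
  have [_ [P23 [_ [Q23 [_ [Pt23 [_ Qt23]]]]]]] := hz 3%N isT.
  split; apply: sym_mx3_scale => // -[|[|[|[|a]]]] -[|[|[|[|b]]]] //= _ _;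
    by rewrite ?P12 ?Q12 ?Pt12 ?Qt12 ?P22 ?Q22 ?Pt22 ?Qt22 ?P23 ?Q23 ?Pt23 ?Qt23 mulr0.
Qed.
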